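(* Let $K$ be a field of characteristic zero, $W_n$ the Witt Lie algebra and $\sigma\in\mathrm{Aut}_{\mathrm{Lie}}(W_n)$. Then $A_\sigma\in\mathrm{GL}_n(\mathbb{Z})$.
   Context: $W_n=\mathrm{Der}_K(K[x_1^{\pm1},\ldots,x_n^{\pm1}])$, $\mathcal{H}_n=\bigoplus_iKH_i$, $H_i=x_i\partial_i$. Every Lie automorphism $\sigma$ of $W_n$ satisfies $\sigma(\mathcal{H}_n)=\mathcal{H}_n$, and $A_\sigma=(a_{ij})\in\mathrm{GL}_n(K)$ is the unique matrix with $\sigma(H_i)=\sum_ja_{ij}H_j$ for all $i$. *)

From HB Require Import structures.
From mathcomp Require Import all_boot all_order all_algebra.
From mathcomp Require Import finmap.
From mathcomp.multinomials Require Import monalg.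
Set Implicit Arguments. Unset Strict Implicit. Unset Printing Implicit Defensive.
Import Order.TTheory GRing.Theory Num.Theory.
Local Open Scope ring_scope.

(* The Laurent polynomial ring K[x_1^{±1},...,x_n^{±1}]: finitely supported
   functions Z^n -> K; the monomial x^a (a ∈ Z^n) is << 1 *g a >>.
   Its K-vector-space structure is the one of {malg ...}. *)
Definition laurent (K : fieldType) (n : nat) := {malg K['rV[int]_n]}.

Definition lmul (K : fieldType) (n : nat) (f g : laurent K n) : laurent K n :=
  \sum_(a <- msupp f) \sum_(b <- msupp g) << f@_a * g@_b *g (a + b) >>.

(* K-derivations of the Laurent polynomial ring; W_n = Der_K(...) is the set of
   maps D satisfying is_der, with Lie bracket [D1,D2] = D1 D2 - D2 D1. *)
Definition is_der (K : fieldType) (n : nat) (D : laurent K n -> laurent K n) : Prop :=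
  (forall (c : K) (f g : laurent K n), D (c *: f + g) = c *: D f + D g) /\
  (forall f g : laurent K n, D (lmul f g) = lmul (D f) g + lmul f (D g)).

Definition der_add (K : fieldType) (n : nat) (D1 D2 : laurent K n -> laurent K n) :=
  fun f => D1 f + D2 f.
Definition der_scale (K : fieldType) (n : nat) (c : K) (D : laurent K n -> laurent K n) :=
  fun f => c *: D f.
Definition der_bracket (K : fieldType) (n : nat) (D1 D2 : laurent K n -> laurent K n) :=
  fun f => D1 (D2 f) - D2 (D1 f).

(* H_i = x_i ∂_i : x^a |-> a_i x^a *)
Definition H (K : fieldType) (n : nat) (i : 'I_n) : laurent K n -> laurent K n :=
  fun f => \sum_(a <- msupp f) << (a ord0 i)%:~R * f@_a *g a >>.

(* sigma is a Lie algebra automorphism of W_n (a map defined on all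
   maps L -> L; only its restriction to W_n matters). *)
Definition is_lie_aut (K : fieldType) (n : nat)
  (s : (laurent K n -> laurent K n) -> (laurent K n -> laurent K n)) : Prop :=
  [/\ forall D, is_der D -> is_der (s D),
      forall c D1 D2, is_der D1 -> is_der D2 ->
        s (der_add (der_scale c D1) D2) = der_add (der_scale c (s D1)) (s D2),
      forall D1 D2, is_der D1 -> is_der D2 ->
        s (der_bracket D1 D2) = der_bracket (s D1) (s D2),
      forall D1 D2, is_der D1 -> is_der D2 -> s D1 = s D2 -> D1 = D2 &
      forall E, is_der E -> exists2 D, is_der D & s D = E].

Definition is_A_sigma (K : fieldType) (n : nat)
  (s : (laurent K n -> laurent K n) -> (laurent K n -> laurent K n)) (a : 'M[K]_n) : Prop :=
  forall i : 'I_n, s (H i) = fun f => \sum_(j < n) a i j *: H j f.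

Definition in_GLnZ (K : fieldType) (n : nat) (a : 'M[K]_n) : Prop :=
  exists2 B : 'M[int]_n, B \in unitmx & a = map_mx (fun z : int => z%:~R) B.

(* The Euler operators H_i act diagonally on Laurent monomials, x^a having
   weight a, and E_j = x_j H_j satisfies [H_i, E_j] = delta_ij E_j.
   Since sigma(H_i) = sum_l a_il H_l, the nonzero derivation sigma(E_j) is an
   eigenvector of ad sigma(H_i) with eigenvalue delta_ij; reading off a nonzero
   coefficient x^p of sigma(E_j)(x^m) gives A (p - m) = e_j, so A has an
   integral right inverse. Dually D = sigma^-1(E_j) satisfies
   [H_i, D] = a_ij D, and the same weight argument gives a_ij = p_i - m_i.
   In characteristic 0 the integer identity A C = 1 then holds over Z. *)

From mathcomp Require Import all_boot all_algebra.
From mathcomp Require Import finmap ring.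
From mathcomp.multinomials Require Import monalg.
From Stdlib Require Import FunctionalExtensionality Classical.
Set Implicit Arguments. Unset Strict Implicit. Unset Printing Implicit Defensive.
Import GRing.Theory.
Local Open Scope fset_scope.
Local Open Scope ring_scope.

Section LaurentMul.
Variables (K : fieldType) (n : nat).
Local Notation L := (laurent K n).
Implicit Types (f g : L) (a b : 'rV[int]_n).

Lemma lmul_fsubset (d1 d2 : {fset 'rV[int]_n}) f g :
  msupp f `<=` d1 -> msupp g `<=` d2 ->
  lmul f g = \sum_(a <- d1) \sum_(b <- d2) << f@_a * g@_b *g (a + b) >>.
Proof.
move=> le_d1 le_d2; rewrite /lmul (big_fset_incl _ le_d1) /=.
  apply/eq_bigr=> a _; apply/big_fset_incl => // b _ /mcoeff_outdom ->.
  by rewrite mulr0 monalgU0.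
move=> a _ /mcoeff_outdom ->.
by rewrite big1 => // b _; rewrite mul0r monalgU0.
Qed.

Lemma lmul0r g : lmul 0 g = 0.
Proof. by rewrite /lmul msupp0 big_seq_fset0. Qed.

Lemma lmulr0 f : lmul f 0 = 0.
Proof. by rewrite /lmul msupp0; apply: big1 => a _; rewrite big_seq_fset0. Qed.

Lemma lmulDl f1 f2 g : lmul (f1 + f2) g = lmul f1 g + lmul f2 g.
Proof.
rewrite !(@lmul_fsubset (msupp f1 `|` msupp f2) (msupp g))
  ?msuppD_le ?fsubsetUl ?fsubsetUr //.
rewrite -big_split; apply/eq_bigr=> a _; rewrite -big_split; apply/eq_bigr=> b _.
by rewrite mcoeffD mulrDl monalgUD.
Qed.

Lemma lmulDr f g1 g2 : lmul f (g1 + g2) = lmul f g1 + lmul f g2.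
Proof.
rewrite !(@lmul_fsubset (msupp f) (msupp g1 `|` msupp g2))
  ?msuppD_le ?fsubsetUl ?fsubsetUr //.
rewrite -big_split; apply/eq_bigr=> a _; rewrite -big_split; apply/eq_bigr=> b _.
by rewrite mcoeffD mulrDr monalgUD.
Qed.

Lemma monalgUZ (c x : K) a : << c * x *g a >> = c *: (<< x *g a >> : L).
Proof.
apply/malgP => p; rewrite mcoeffZ [LHS]mcoeffU [in RHS]mcoeffU.
by case: eqP; rewrite ?mulr0n ?mulr1n ?mulr0.
Qed.

Lemma lmulZl c f g : lmul (c *: f) g = c *: lmul f g.
Proof.
rewrite (@lmul_fsubset (msupp f) (msupp g)) ?msuppZ_le // /lmul scaler_sumr.
apply/eq_bigr=> a _; rewrite scaler_sumr; apply/eq_bigr=> b _.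
by rewrite mcoeffZ -mulrA monalgUZ.
Qed.

Lemma lmulZr c f g : lmul f (c *: g) = c *: lmul f g.
Proof.
rewrite (@lmul_fsubset (msupp f) (msupp g)) ?msuppZ_le // /lmul scaler_sumr.
apply/eq_bigr=> a _; rewrite scaler_sumr; apply/eq_bigr=> b _.
by rewrite mcoeffZ mulrCA monalgUZ.
Qed.

Lemma lmulUU x y a b :
  lmul (<< x *g a >> : L) << y *g b >> = << x * y *g a + b >>.
Proof. by rewrite (lmul_fsubset msuppU_le msuppU_le) !big_seq_fset1 !mcoeffUU. Qed.

Lemma lmulBl (h : L) : {morph (@lmul K n)^~ h : f g / f - g}.
Proof. by move=> f g; rewrite lmulDl -scaleN1r lmulZl scaleN1r. Qed.

Lemma lmulBr f : {morph @lmul K n f : g h / g - h}.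
Proof. by move=> g h; rewrite lmulDr -scaleN1r lmulZr scaleN1r. Qed.

Lemma mcoeff_sum_monalgU (d : {fset 'rV[int]_n}) (F : 'rV[int]_n -> K) p :
  (forall a, a \notin d -> F a = 0) ->
  (\sum_(a <- d) << F a *g a >> : L)@_p = F p.
Proof.
move=> F0; rewrite raddf_sum /=.
have [pd|pNd] := boolP (p \in d).
  rewrite (big_fsetD1 p) //= mcoeffUU big1_fset ?addr0 // => a.
  by rewrite in_fsetD1 mcoeffU => /andP[/negPf -> _]; rewrite mulr0n.
rewrite F0 // big1_fset // => a ad _; rewrite mcoeffU.
by case: eqP => [ap|]; rewrite ?mulr0n // ap F0.
Qed.

End LaurentMul.

Section Monomials.
Variables (K : fieldType) (n : nat).
Local Notation L := (laurent K n).
Implicit Types (f g : L) (x y : K) (a b p : 'rV[int]_n).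

(* Locked: unification that unfolds [<< x *g a >>] into its finitely
   supported function is prohibitively slow. *)
Fact monomial_key : unit. Proof. by []. Qed.
Definition monomial : K -> 'rV[int]_n -> L :=
  locked_with monomial_key (fun x a => << x *g a >>).

Lemma monomialE x a : monomial x a = << x *g a >>.
Proof. by rewrite /monomial locked_withE. Qed.

Lemma mcoeff_monomial x a p : (monomial x a)@_p = x *+ (a == p).
Proof. by rewrite monomialE mcoeffU. Qed.

Lemma monomial_eq0 x a : (monomial x a == 0) = (x == 0).
Proof. by rewrite monomialE monalgU_eq0. Qed.

Lemma monomialD x y a : monomial x a + monomial y a = monomial (x + y) a.
Proof. by rewrite !monomialE monalgUD. Qed.

Lemma monomialB x y a : monomial x a - monomial y a = monomial (x - y) a.
Proof. by rewrite !monomialE monalgUB. Qed.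

Lemma monomialZ x y a : monomial (x * y) a = x *: monomial y a.
Proof. by rewrite !monomialE monalgUZ. Qed.

Lemma lmul_monomial x y a b :
  lmul (monomial x a) (monomial y b) = monomial (x * y) (a + b).
Proof. by rewrite !monomialE lmulUU. Qed.

Lemma monomial_ext (V : zmodType) (F G : L -> V) :
  {morph F : f g / f + g} -> {morph G : f g / f + g} ->
  (forall x a, F (monomial x a) = G (monomial x a)) -> F =1 G.
Proof.
move=> FD GD FG f.
have F0 : F 0 = 0 by apply/(addrI (F 0)); rewrite -FD !addr0.
have G0 : G 0 = 0 by apply/(addrI (G 0)); rewrite -GD !addr0.
rewrite [f]monalgE (big_morph F FD F0) (big_morph G GD G0).
by apply: eq_bigr => a _; rewrite -monomialE.
Qed.

End Monomials.

Section EulerOperators.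
Variables (K : fieldType) (n : nat).
Local Notation L := (laurent K n).
Local Notation H := (@H K n).
Implicit Types (f g : L) (x : K) (a b p : 'rV[int]_n) (c : 'I_n -> K).

Lemma mcoeffH i f p : (H i f)@_p = (p ord0 i)%:~R * f@_p.
Proof. by rewrite /H mcoeff_sum_monalgU // => a /mcoeff_outdom ->; rewrite mulr0. Qed.

Lemma HD i : {morph H i : f g / f + g}.
Proof.
move=> f g; apply/malgP => p.
rewrite [RHS]mcoeffD [LHS]mcoeffH [X in _ = X + _]mcoeffH [X in _ = _ + X]mcoeffH.
by rewrite mcoeffD mulrDr.
Qed.

Lemma HZ i x f : H i (x *: f) = x *: H i f.
Proof.
apply/malgP => p; rewrite [RHS]mcoeffZ [LHS]mcoeffH [in RHS]mcoeffH.
by rewrite mcoeffZ mulrCA.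
Qed.

Lemma H_monomial i x a : H i (monomial x a) = monomial ((a ord0 i)%:~R * x) a.
Proof.
apply/malgP => p; rewrite mcoeffH !mcoeff_monomial.
by case: eqP => [->|_]; rewrite ?mulr0n ?mulr1n ?mulr0.
Qed.

Definition hweight c p : K := \sum_j c j * (p ord0 j)%:~R.

Definition Hsum c : L -> L := fun f => \sum_j c j *: H j f.

Lemma mcoeff_Hsum c f p : (Hsum c f)@_p = hweight c p * f@_p.
Proof.
rewrite raddf_sum mulr_suml /=; apply: eq_bigr => j _.
by rewrite mcoeffZ mcoeffH mulrA.
Qed.

Lemma hweightB c p q : hweight c (p - q) = hweight c p - hweight c q.
Proof. by rewrite -sumrB; apply: eq_bigr => j _; rewrite !mxE intrB mulrBr. Qed.

Lemma hweight_delta c j : hweight c (delta_mx 0 j) = c j.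
Proof.
rewrite /hweight (bigD1 j) //= big1 => [|l /negPf lj]; rewrite mxE ?eqxx ?lj //.
  by rewrite mulr1 addr0.
by rewrite andbF mulr0.
Qed.

End EulerOperators.

Lemma leibniz_commutator (V : zmodType) (mul : V -> V -> V) (D1 D2 : V -> V) :
  (forall w, {morph mul^~ w : u v / u - v}) ->
  (forall u, {morph mul u : v w / v - w}) ->
  {morph D1 : u v / u + v} -> {morph D2 : u v / u + v} ->
  (forall u v, D1 (mul u v) = mul (D1 u) v + mul u (D1 v)) ->
  (forall u v, D2 (mul u v) = mul (D2 u) v + mul u (D2 v)) ->
  forall u v, D1 (D2 (mul u v)) - D2 (D1 (mul u v)) =
    mul (D1 (D2 u) - D2 (D1 u)) v + mul u (D1 (D2 v) - D2 (D1 v)).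
Proof.
move=> mulBl mulBr D1D D2D l1 l2 u v.
have cross_cancel (a x y b a' b' : V) :
    a + x + (y + b) - (a' + y + (x + b')) = a - a' + (b - b').
  rewrite (addrC y b) (addrC x b') (addrACA a x) (addrACA a' y) (addrC y x).
  by rewrite [a' + b' + _]addrC addrKA opprD addrACA.
by rewrite l2 l1 D1D D2D !l1 !l2 mulBl mulBr cross_cancel.
Qed.

Section Derivations.
Variables (K : fieldType) (n : nat).
Local Notation L := (laurent K n).
Local Notation H := (@H K n).
Local Notation Hsum := (@Hsum K n).
Local Notation monomial := (@monomial K n).
Local Notation is_der := (@is_der K n).
Implicit Types (f g : L) (x y : K) (D : L -> L) (a b m p : 'rV[int]_n).

Lemma derD D : is_der D -> {morph D : f g / f + g}.
Proof. by case=> lin _ f g; have := lin 1 f g; rewrite !scale1r. Qed.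

Lemma der0 D : is_der D -> D 0 = 0.
Proof. by move=> dD; apply/(addrI (D 0)); rewrite -derD // !addr0. Qed.

Lemma derZ D : is_der D -> forall x f, D (x *: f) = x *: D f.
Proof.
by move=> dD x f; case: (dD) => lin _; rewrite -[x *: f]addr0 lin der0 // addr0.
Qed.

Lemma der_sum D (I : Type) (r : seq I) (F : I -> L) :
  is_der D -> D (\sum_(i <- r) F i) = \sum_(i <- r) D (F i).
Proof. by move=> dD; rewrite (big_morph D (derD dD) (der0 dD)). Qed.

Lemma der_monomial_coef D : is_der D -> D <> (fun _ => 0) ->
  exists m p, (D (monomial 1 m))@_p != 0.
Proof.
move=> dD /(_ (functional_extensionality _ _ _)) D_neq0; apply: NNPP => Dm0.
apply: D_neq0; apply: (monomial_ext (derD dD)) => // [f g|x m]; first by rewrite addr0.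
rewrite -[x]mulr1 monomialZ derZ //; apply/malgP => p; rewrite mcoeffZ mcoeff0.
have [->|nz] := eqVneq (D (monomial 1 m))@_p 0; first by rewrite mulr0.
by case: Dm0; exists m, p.
Qed.

Lemma leibniz_monomial D : {morph D : f g / f + g} ->
  (forall x y a b, D (lmul (monomial x a) (monomial y b)) =
     lmul (D (monomial x a)) (monomial y b) + lmul (monomial x a) (D (monomial y b))) ->
  forall f g, D (lmul f g) = lmul (D f) g + lmul f (D g).
Proof.
move=> DD DM f g.
have DMl x a : forall g, D (lmul (monomial x a) g) =
    lmul (D (monomial x a)) g + lmul (monomial x a) (D g).
  apply: monomial_ext => [h1 h2 | h1 h2 | y b]; last exact: DM.
    by rewrite lmulDr DD.
  by rewrite (DD h1 h2) !lmulDr; apply: addrACA.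
move: f; apply: monomial_ext => [f1 f2 | f1 f2 | x a]; last exact: DMl.
  by rewrite lmulDl DD.
by rewrite (DD f1 f2) !lmulDl; apply: addrACA.
Qed.

Lemma is_der_H i : is_der (H i).
Proof.
split=> [x f g | ]; first by rewrite HD HZ.
apply: leibniz_monomial => [f g | x y a b]; first exact: HD.
rewrite lmul_monomial !H_monomial !lmul_monomial monomialD.
by congr monomial; rewrite mxE intrD; ring.
Qed.

Definition XH b (k : 'I_n) : L -> L := fun f => lmul (monomial 1 b) (H k f).

Lemma is_der_XH b k : is_der (XH b k).
Proof.
split=> [x f g | ].
  by rewrite /XH HD HZ; move: (H k f) (H k g) => u v; rewrite lmulDr lmulZr.
apply: leibniz_monomial => [f g | x y a c]; first by rewrite /XH HD lmulDr.
rewrite /XH lmul_monomial !H_monomial !lmul_monomial.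
rewrite -(addrA b a c) (addrCA a b c) monomialD.
by congr monomial; rewrite mxE intrD; ring.
Qed.

Lemma XH_neq0 b k : XH b k <> (fun _ => 0).
Proof.
move/(congr1 (fun E => E (monomial 1 (delta_mx 0 k)))) => /eqP.
by rewrite /XH H_monomial lmul_monomial monomial_eq0 mxE !eqxx !mul1r oner_eq0.
Qed.

Lemma is_der0 : is_der (fun _ => 0).
Proof. by split=> [x f g | f g]; rewrite ?scaler0 ?addr0 ?lmul0r ?lmulr0 ?addr0. Qed.

Lemma is_der_scale x D : is_der D -> is_der (der_scale x D).
Proof.
move=> dD; split=> [y f g | f g]; rewrite /der_scale.
  by rewrite derD // derZ // scalerDr !scalerA mulrC.
by case: dD => _ ->; rewrite scalerDr lmulZl lmulZr.
Qed.

Lemma is_der_bracket D1 D2 : is_der D1 -> is_der D2 -> is_der (der_bracket D1 D2).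
Proof.
move=> d1 d2; split=> [x f g | f g]; rewrite /der_bracket.
  by rewrite !(derD d1, derD d2, derZ d1, derZ d2) scalerBr addrACA opprD.
case: (d1) (d2) => _ l1 [_ l2].
exact: (leibniz_commutator (@lmulBl K n) (@lmulBr K n) (derD d1) (derD d2) l1 l2).
Qed.

Lemma bracket_H_XH i b k :
  der_bracket (H i) (XH b k) = der_scale (b ord0 i)%:~R (XH b k).
Proof.
apply: functional_extensionality; apply: monomial_ext.
- exact: derD (is_der_bracket (is_der_H i) (is_der_XH b k)).
- exact: derD (is_der_scale _ (is_der_XH b k)).
move=> x a; rewrite /der_bracket /der_scale /XH.
rewrite !H_monomial !lmul_monomial H_monomial monomialB -monomialZ.
by congr monomial; rewrite mxE intrD; ring.
Qed.

Lemma bracket_Hsum_XH c b k :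
  der_bracket (Hsum c) (XH b k) = der_scale (hweight c b) (XH b k).
Proof.
apply: functional_extensionality => f; have dX := is_der_XH b k.
rewrite /der_bracket /der_scale /Hsum (der_sum (D := XH b k)) // -sumrB.
rewrite /hweight scaler_suml; apply: eq_bigr => j _.
rewrite (derZ dX) -scalerBr -scalerA.
have := congr1 (fun E => E f) (bracket_H_XH j b k).
by rewrite /der_bracket /der_scale => ->.
Qed.

(* [T] acts diagonally on monomials; an eigenvector [D] of [ad T] shifts
   weights by its eigenvalue. *)
Lemma bracket_weight (T D : L -> L) (wt : 'rV[int]_n -> K) w m p :
  (forall f q, (T f)@_q = wt q * f@_q) -> (forall x f, D (x *: f) = x *: D f) ->
  der_bracket T D = der_scale w D -> (D (monomial 1 m))@_p != 0 ->
  wt p - wt m = w.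
Proof.
move=> Tdiag DZ TD nz.
have Tm : T (monomial 1 m) = wt m *: monomial 1 m.
  apply/malgP => q; rewrite Tdiag mcoeffZ mcoeff_monomial.
  by case: eqP => [->|]; rewrite ?mulr0n ?mulr0.
move/(congr1 (fun E => (E (monomial 1 m))@_p)): TD.
rewrite /der_bracket /der_scale mcoeffB Tdiag Tm DZ.
rewrite [in LHS]mcoeffZ [RHS]mcoeffZ -mulrBl.
exact: mulIf.
Qed.

End Derivations.

Section LieAutomorphisms.
Variables (K : fieldType) (n : nat).
Local Notation L := (laurent K n).
Local Notation H := (@H K n).
Local Notation Hsum := (@Hsum K n).
Local Notation XH := (@XH K n).
Variable s : (L -> L) -> (L -> L).
Hypothesis s_aut : is_lie_aut s.

Lemma lie_aut0 : s (fun _ => 0) = (fun _ => 0).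
Proof.
case: s_aut => _ s_lin _ _ _.
have zero_sum : der_add (der_scale 1 (fun _ : L => 0)) (fun _ => 0) = (fun _ => 0).
  by apply: functional_extensionality => f; rewrite /der_add /der_scale scaler0 addr0.
have s0 := etrans (congr1 s (esym zero_sum))
  (s_lin 1 _ _ (@is_der0 K n) (@is_der0 K n)).
apply: functional_extensionality => f; apply/(addrI (s (fun _ => 0) f)).
by rewrite addr0 {3}s0 /der_add /der_scale scale1r.
Qed.

Lemma lie_autZ x D : is_der D -> s (der_scale x D) = der_scale x (s D).
Proof.
move=> dD; case: s_aut => _ s_lin _ _ _.
have add0 E : der_add E (fun _ : L => 0) = E.
  by apply: functional_extensionality => f; rewrite /der_add addr0.
apply: (etrans (etrans (congr1 s (esym (add0 _))) (s_lin x _ _ dD (@is_der0 K n)))).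
by rewrite lie_aut0 add0.
Qed.

Variable a : 'M[K]_n.
Hypothesis s_H : is_A_sigma s a.

Lemma lie_aut_H i : s (H i) = Hsum (a i).
Proof. exact: s_H. Qed.

Lemma lie_aut_A_int i j : exists z : int, a i j = z%:~R.
Proof.
case: s_aut => _ _ s_br s_inj s_surj.
have [D dD sDE] := s_surj _ (@is_der_XH K n (delta_mx 0 j) j).
have dH := @is_der_H K n i.
have D_weight : der_bracket (H i) D = der_scale (a i j) D.
  apply: s_inj; [exact: is_der_bracket | exact: is_der_scale | ].
  by rewrite [LHS]s_br // [RHS]lie_autZ // sDE lie_aut_H bracket_Hsum_XH hweight_delta.
have D_neq0 : D <> (fun _ => 0).
  by move=> D0; apply: (@XH_neq0 K n (delta_mx 0 j) j); rewrite -sDE D0 lie_aut0.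
have [m [p nz]] := der_monomial_coef dD D_neq0.
exists (p ord0 i - m ord0 i); rewrite intrB.
exact: esym (bracket_weight (mcoeffH i) (derZ dD) D_weight nz).
Qed.

Lemma lie_aut_A_col j : exists d : 'rV[int]_n, forall i, hweight (a i) d = (i == j)%:R.
Proof.
case: s_aut => s_der _ s_br s_inj _.
have dE := @is_der_XH K n (delta_mx 0 j) j; have dsE := s_der _ dE.
have sE_neq0 : s (XH (delta_mx 0 j) j) <> (fun _ => 0).
  move=> sE0; apply: (@XH_neq0 K n (delta_mx 0 j) j).
  by apply: (s_inj _ _ dE (@is_der0 K n)); rewrite [LHS]sE0 lie_aut0.
have [m [p nz]] := der_monomial_coef dsE sE_neq0.
exists (p - m) => i; rewrite hweightB.
apply: (bracket_weight (mcoeff_Hsum (a i)) (derZ dsE) _ nz).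
have dH := @is_der_H K n i.
rewrite -lie_aut_H -(s_br _ _ dH dE) bracket_H_XH (lie_autZ _ dE).
by rewrite mxE eqxx rmorph_nat.
Qed.

End LieAutomorphisms.

Lemma intr_inj_pchar0 (R : idomainType) : [pchar R] =i pred0 ->
  injective (fun z : int => z%:~R : R).
Proof.
move=> R0 z w /eqP; rewrite -subr_eq0 -intrB => /eqP zw; apply/eqP.
rewrite -subr_eq0; move: zw; case: (z - w) => k.
  by move/eqP; rewrite (pcharf0P R).1.
by rewrite NegzE intrN => /eqP; rewrite oppr_eq0 (pcharf0P R).1.
Qed.

Theorem corollary2p7 (K : fieldType) (n : nat) (hK : [pchar K] =i pred0)
  (s : (laurent K n -> laurent K n) -> (laurent K n -> laurent K n))
  (a : 'M[K]_n) :
  is_lie_aut s -> is_A_sigma s a -> in_GLnZ a.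
Proof.
move=> s_aut s_H.
have /fin_all_exists [Z aZ] (i : 'I_n) :
    exists Zi : 'I_n -> int, forall j, a i j = (Zi j)%:~R.
  apply: (fin_all_exists (P := fun j z => a i j = z%:~R)) => j.
  exact: (lie_aut_A_int s_aut s_H).
have [d ad] := fin_all_exists (lie_aut_A_col s_aut s_H).
pose A := \matrix_(i, j) Z i j.
have AC : A *m \matrix_(l, j) d j ord0 l = 1%:M.
  apply/matrixP => i j; apply: (intr_inj_pchar0 hK).
  rewrite !mxE rmorph_nat -ad rmorph_sum; apply: eq_bigr => l _.
  by rewrite rmorphM !mxE aZ.
exists A; first by case: (mulmx1_unit AC).
by apply/matrixP => i j; rewrite !mxE aZ.
Qed.
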